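(* Let $k>0$ and assume $g$ satisfies (Hg) and (Hg2). Then there exists $\delta_a\in(0,1)$ such that for all $a\in(0,\delta_a)$: (i) $g''(a;a)>0$; (ii) $$0<\frac{g'(a;a)}{k+1}<\max_{A\in[a+\frac{2a}{k},1]}\frac{g(A;a)}{A}.$$
   Context: Derivatives $g',g''$ are with respect to the first argument. A function $g:\mathbb R\times[0,1]\to\mathbb R$, $(u,a)\mapsto g(u;a)$, satisfies (Hg) if it is $C^1$ and for every $a\in(0,1)$: $g(0;a)=g(a;a)=g(1;a)=0$, $g'(0;a)<0$, $g'(1;a)<0$, $g'(a;a)>0$, $g(v;a)>0$ for $v\in(-\infty,0)\cup(a,1)$ and $g(v;a)<0$ for $v\in(0,a)\cup(1,\infty)$. (Hg2): for each $a\in[0,1]$, $g(\cdot;a)\in C^2(\mathbb R)$; $g'(a;a)=0$ for $a\in\{0,1\}$; $g''(0;0)>0$, $g''(1;1)<0$; and there exist $a_0,a_1\in(0,1)$ such that for each $a\in(0,a_0)$ and each $a\in(a_1,1)$ there is a unique $v$ with $g''(v;a)=0$. *)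

From Stdlib Require Import Reals.
From Coquelicot Require Import Coquelicot.
Open Scope R_scope.

Definition gd1 (g : R -> R -> R) (u a : R) : R := Derive (fun v => g v a) u.
Definition gd2 (g : R -> R -> R) (u a : R) : R := Derive_n (fun v => g v a) 2 u.

Definition cont_strip (f : R -> R -> R) : Prop :=
  forall u a, 0 <= a <= 1 -> forall eps, 0 < eps -> exists delta, 0 < delta /\
    forall u' a', 0 <= a' <= 1 -> Rabs (u' - u) < delta -> Rabs (a' - a) < delta ->
      Rabs (f u' a' - f u a) < eps.

Definition C1_strip (g : R -> R -> R) : Prop :=
  exists gu ga : R -> R -> R,
    (forall u a, 0 <= a <= 1 -> is_derive (fun v => g v a) u (gu u a)) /\
    (forall u a, 0 < a < 1 -> is_derive (fun b => g u b) a (ga u a)) /\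
    cont_strip g /\ cont_strip gu /\ cont_strip ga.

Definition Hg (g : R -> R -> R) : Prop :=
  C1_strip g /\
  forall a, 0 < a < 1 ->
    g 0 a = 0 /\ g a a = 0 /\ g 1 a = 0 /\
    gd1 g 0 a < 0 /\ gd1 g 1 a < 0 /\ 0 < gd1 g a a /\
    (forall v, (v < 0 \/ (a < v < 1)) -> 0 < g v a) /\
    (forall v, ((0 < v < a) \/ 1 < v) -> g v a < 0).

Definition C2_R (f : R -> R) : Prop :=
  (forall u, ex_derive f u) /\ (forall u, ex_derive (Derive f) u) /\
  (forall u, continuous (Derive_n f 2) u).

Definition Hg2 (g : R -> R -> R) : Prop :=
  (forall a, 0 <= a <= 1 -> C2_R (fun v => g v a)) /\
  gd1 g 0 0 = 0 /\ gd1 g 1 1 = 0 /\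
  0 < gd2 g 0 0 /\ gd2 g 1 1 < 0 /\
  exists a0 a1, 0 < a0 < 1 /\ 0 < a1 < 1 /\
    (forall a, 0 < a < a0 -> exists! v, gd2 g v a = 0) /\
    (forall a, a1 < a < 1 -> exists! v, gd2 g v a = 0).

From Stdlib Require Import Reals Lra.
From Coquelicot Require Import Coquelicot.
Open Scope R_scope.

(* Since g''(0;0) > 0 = g'(0;0), there is a small y > 0 with g'(y;0) > 0 and
   g(y;0) > 0.  As a -> 0+, g'(a;a) -> g'(0;0) = 0, while g'(y;a) and g(y;a)/y
   stay close to their positive values at a = 0.  This gives (ii), y being a
   competitor in the maximum.  For (i): g'(.;a) goes from g'(0;a) < 0 up to
   g'(a;a) > 0 and down to g'(1;a) < 0, so g''(.;a) takes both signs; if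
   g''(a;a) <= 0, uniqueness of the zero of g''(.;a) forces g'' <= 0 on
   [a, +oo), hence g'(y;a) <= g'(a;a), contradicting the limits above. *)

Lemma at_right_0_interval (P : R -> Prop) :
  at_right 0 P -> exists d, 0 < d < 1 /\ forall a, 0 < a < d -> P a.
Proof.
  intros [eps Heps].
  pose proof (Rmin_l eps (1 / 2)). pose proof (Rmin_r eps (1 / 2)).
  pose proof (Rmin_pos eps (1 / 2) (cond_pos eps) ltac:(lra)).
  exists (Rmin eps (1 / 2)); split; [lra|].
  intros a Ha. apply Heps; [|lra].
  change (Rabs (a - 0) < eps). rewrite Rminus_0_r, Rabs_pos_eq; lra.
Qed.

Lemma at_right_0_mul_lt c r : 0 < c -> 0 < r -> at_right 0 (fun a => c * a < r).
Proof.
  intros Hc Hr. exists (mkposreal _ (Rdiv_lt_0_compat r c Hr Hc)). simpl.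
  intros a Hball Ha. change (Rabs (a - 0) < r / c) in Hball.
  rewrite Rminus_0_r, Rabs_pos_eq in Hball by lra.
  rewrite Rmult_comm. apply Rlt_div_r; assumption.
Qed.

Lemma cont_strip_at_right (f : R -> R -> R) (s : R -> R) u eps :
  cont_strip f -> 0 < eps -> (forall a, Rabs (s a - u) <= Rabs a) ->
  at_right 0 (fun a => f u 0 - eps < f (s a) a < f u 0 + eps).
Proof.
  intros Hf Heps Hs.
  destruct (Hf u 0 (conj (Rle_refl 0) Rle_0_1) eps Heps) as [d [Hd Hclose]].
  pose proof (Rmin_l d 1). pose proof (Rmin_r d 1).
  exists (mkposreal _ (Rmin_pos d 1 Hd Rlt_0_1)). simpl.
  intros a Hball Ha. change (Rabs (a - 0) < Rmin d 1) in Hball.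
  rewrite Rminus_0_r, Rabs_pos_eq in Hball by lra.
  pose proof (Hs a) as Hsa. rewrite (Rabs_pos_eq a) in Hsa by lra.
  apply Rabs_lt_between', Hclose; [lra | lra |].
  rewrite Rminus_0_r, Rabs_pos_eq; lra.
Qed.

Lemma cont_strip_vertical (f : R -> R -> R) u eps :
  cont_strip f -> 0 < eps -> at_right 0 (fun a => f u 0 - eps < f u a < f u 0 + eps).
Proof.
  intros Hf Heps. apply (cont_strip_at_right f (fun _ => u) u eps Hf Heps).
  intro a. rewrite Rminus_diag, Rabs_R0. apply Rabs_pos.
Qed.

Lemma cont_strip_edge_root (f : R -> R -> R) u :
  cont_strip f -> (forall a, 0 < a < 1 -> f u a = 0) -> f u 0 = 0.
Proof.
  intros Hf Hroot. destruct (Req_dec (f u 0) 0) as [|Hne]; [assumption|exfalso].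
  destruct (at_right_0_interval _ (cont_strip_vertical f u _ Hf (Rabs_pos_lt _ Hne)))
    as [d [Hd Hnear]].
  specialize (Hnear (d / 2) ltac:(lra)).
  rewrite (Hroot (d / 2)) in Hnear by lra.
  revert Hnear. unfold Rabs; destruct Rcase_abs; lra.
Qed.

Lemma cont_strip_ext (f f' : R -> R -> R) :
  (forall u a, 0 <= a <= 1 -> f u a = f' u a) -> cont_strip f -> cont_strip f'.
Proof.
  intros Heq Hf u a Ha eps Heps.
  destruct (Hf u a Ha eps Heps) as [d [Hd Hclose]].
  exists d; split; [assumption|].
  intros u' a' Ha'. rewrite <- !Heq by assumption. apply Hclose, Ha'.
Qed.

Lemma pos_right_of_root (h : R -> R) L :
  is_derive h 0 L -> 0 < L -> h 0 = 0 ->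
  exists y0, 0 < y0 /\ forall u, 0 < u < y0 -> 0 < h u.
Proof.
  intros Hd HL H0. apply is_derive_Reals in Hd.
  destruct (Hd L HL) as [d Hdd]. exists d; split; [apply cond_pos|].
  intros u Hu. specialize (Hdd u ltac:(lra)).
  rewrite Rabs_pos_eq in Hdd by lra. specialize (Hdd ltac:(lra)).
  rewrite Rplus_0_l, H0, Rminus_0_r in Hdd.
  apply Rabs_lt_between in Hdd.
  replace (h u) with (h u / u * u) by (field; lra). nra.
Qed.

Lemma pos_right_of_derive_pos (h dh : R -> R) y0 :
  (forall u, is_derive h u (dh u)) -> (forall u, 0 < u < y0 -> 0 < dh u) ->
  h 0 = 0 -> forall u, 0 < u < y0 -> 0 < h u.
Proof.
  intros Hd Hpos H0 u Hu.
  destruct (MVT_cor2 h dh 0 u) as [c [Hc Hcu]];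
    [lra | intros; apply is_derive_Reals; auto |].
  pose proof (Hpos c ltac:(lra)). nra.
Qed.

Lemma nonincreasing_of_derive_nonpos (f df : R -> R) a :
  (forall u, is_derive f u (df u)) -> (forall u, a <= u -> df u <= 0) ->
  forall x y, a <= x <= y -> f y <= f x.
Proof.
  intros Hd Hneg x y Hxy.
  destruct (Req_dec x y) as [<-|Hne]; [lra|].
  destruct (MVT_cor2 f df x y) as [c [Hc Hcxy]];
    [lra | intros; apply is_derive_Reals; auto |].
  pose proof (Hneg c ltac:(lra)). nra.
Qed.

Lemma unique_root_nonpos_right (h : R -> R) p a q :
  continuity h -> (forall z1 z2, h z1 = 0 -> h z2 = 0 -> z1 = z2) ->
  p <= a < q -> 0 < h p -> h a <= 0 -> h q < 0 ->
  forall w, a <= w -> h w <= 0.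
Proof.
  intros Hc Huniq Hpaq Hp Ha Hq w Hw. apply Rnot_lt_le; intro Hpos.
  destruct (IVT_cor h p a Hc) as [z1 [Hz1 E1]]; [lra | nra |].
  assert (Hz2 : exists z2, a < z2 /\ h z2 = 0).
  { destruct (Rle_lt_dec w q).
    - destruct (IVT_cor h w q Hc) as [z [Hz E]]; [lra | nra |].
      exists z; split; [|assumption].
      assert (z <> w) by (intro Hzw; rewrite Hzw in E; lra). lra.
    - destruct (IVT_cor h q w Hc) as [z [Hz E]]; [lra | nra |].
      exists z; split; [lra | assumption]. }
  destruct Hz2 as [z2 [Hz2 E2]]. pose proof (Huniq z1 z2 E1 E2). lra.
Qed.

Lemma unique_inflection_nonincreasing (f df : R -> R) a :
  (forall u, is_derive f u (df u)) -> continuity df ->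
  (forall z1 z2, df z1 = 0 -> df z2 = 0 -> z1 = z2) ->
  0 < a < 1 -> f 0 < 0 -> 0 < f a -> f 1 < 0 -> df a <= 0 ->
  forall x y, a <= x <= y -> f y <= f x.
Proof.
  intros Hd Hc Huniq Ha H0 Hfa H1 Hda.
  assert (HdR : forall u, derivable_pt_lim f u (df u))
    by (intro; apply is_derive_Reals; auto).
  destruct (MVT_cor2 f df 0 a) as [p [Hp Hpa]]; [lra | auto |].
  destruct (MVT_cor2 f df a 1) as [q [Hq Hqa]]; [lra | auto |].
  apply nonincreasing_of_derive_nonpos with df; [assumption|].
  apply unique_root_nonpos_right with p q; auto; nra.
Qed.

Lemma max_ratio_on_interval (f : R -> R) lo hi :
  0 < lo <= hi -> (forall u, lo <= u <= hi -> continuity_pt f u) ->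
  exists A, lo <= A <= hi /\ forall B, lo <= B <= hi -> f B / B <= f A / A.
Proof.
  intros Hlo Hc.
  destruct (continuity_ab_maj (fun B => f B / B) lo hi) as [A [Hmax HA]];
    [lra | | exists A; auto].
  intros u Hu. apply continuity_pt_div; [auto | apply continuity_pt_id | lra].
Qed.

Lemma C2_R_is_derive2 (f : R -> R) :
  C2_R f -> forall u, is_derive (Derive f) u (Derive_n f 2 u).
Proof. intros [_ [Hex _]] u. apply Derive_correct, Hex. Qed.

Lemma C2_R_continuity2 (f : R -> R) : C2_R f -> continuity (Derive_n f 2).
Proof. intros [_ [_ Hc]] u. apply continuity_pt_filterlim, Hc. Qed.

Lemma Hg_is_derive g :
  Hg g -> forall u a, 0 <= a <= 1 -> is_derive (fun v => g v a) u (gd1 g u a).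
Proof.
  intros [[gu [ga [Hgu _]]] _] u a Ha.
  apply Derive_correct. exists (gu u a). auto.
Qed.

Lemma Hg_cont g : Hg g -> cont_strip g.
Proof. intros [[gu [ga [_ [_ [Hcont _]]]]] _]. exact Hcont. Qed.

Lemma Hg_cont_gd1 g : Hg g -> cont_strip (gd1 g).
Proof.
  intros HG. pose proof HG as [[gu [ga [Hgu [_ [_ [Hcont _]]]]]] _].
  apply (cont_strip_ext gu); [|assumption].
  intros u a Ha. symmetry. apply is_derive_unique, Hgu, Ha.
Qed.

Lemma Hg_root_corner g : Hg g -> g 0 0 = 0.
Proof.
  intros HG. apply cont_strip_edge_root; [apply Hg_cont, HG|].
  intros a Ha. apply (proj2 HG a Ha).
Qed.

Lemma gd1_g_pos_near_corner g :
  Hg g -> Hg2 g ->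
  exists y0, 0 < y0 /\ forall u, 0 < u < y0 -> 0 < gd1 g u 0 /\ 0 < g u 0.
Proof.
  intros HG [HC2 (Hd00 & _ & Hdd00 & _)].
  assert (HC2_0 := HC2 0 ltac:(lra)).
  destruct (pos_right_of_root (fun u => gd1 g u 0) (gd2 g 0 0))
    as [y0 [Hy0 Hpos]]; [exact (C2_R_is_derive2 _ HC2_0 0) | assumption.. |].
  exists y0; split; [assumption|]. intros u Hu. split; [auto|].
  apply (pos_right_of_derive_pos (fun v => g v 0) (fun v => gd1 g v 0) y0); auto.
  - intro v. apply Hg_is_derive; [assumption | lra].
  - apply Hg_root_corner, HG.
Qed.

Lemma gd2_diag_pos g a y :
  Hg g -> Hg2 g -> 0 < a < 1 -> (exists! v, gd2 g v a = 0) ->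
  a <= y -> gd1 g a a < gd1 g y a -> 0 < gd2 g a a.
Proof.
  intros [_ Hsign] [HC2 _] Ha [v [_ Hv]] Hay Hgap.
  destruct (Rlt_or_le 0 (gd2 g a a)) as [|Hnp]; [assumption|exfalso].
  destruct (Hsign a Ha) as (_ & _ & _ & H0 & H1 & Haa & _).
  assert (Hone : forall z1 z2, gd2 g z1 a = 0 -> gd2 g z2 a = 0 -> z1 = z2).
  { intros z1 z2 E1 E2. rewrite <- (Hv z1 E1). apply Hv, E2. }
  assert (HC2a := HC2 a ltac:(lra)).
  assert (Hmono := unique_inflection_nonincreasing (fun u => gd1 g u a)
    (fun u => gd2 g u a) a (C2_R_is_derive2 _ HC2a) (C2_R_continuity2 _ HC2a)
    Hone Ha H0 Haa H1 Hnp a y).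
  simpl in Hmono. specialize (Hmono ltac:(lra)). lra.
Qed.

Lemma witness_near_corner k g :
  0 < k -> Hg g -> Hg2 g ->
  exists y, 0 < y <= 1 /\ at_right 0 (fun a =>
    a + 2 * a / k <= y /\ gd1 g a a < gd1 g y a /\ gd1 g a a / (k + 1) < g y a / y).
Proof.
  intros Hk HG HG2.
  destruct (gd1_g_pos_near_corner g HG HG2) as [y0 [Hy0 Hpos]].
  set (y := Rmin y0 1 / 2).
  assert (Hy : 0 < y < y0 /\ y <= 1 / 2).
  { pose proof (Rmin_l y0 1). pose proof (Rmin_r y0 1).
    pose proof (Rmin_pos y0 1 Hy0 Rlt_0_1). unfold y; lra. }
  destruct (Hpos y ltac:(lra)) as [Hd1y Hgy].
  assert (Hd00 : gd1 g 0 0 = 0) by apply HG2.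
  assert (Hk2 : 0 < 2 / k) by (apply Rdiv_lt_0_compat; lra).
  set (eps := Rmin (gd1 g y 0 / 2) ((k + 1) * (g y 0 / 2 / y))).
  pose proof (Rmin_l (gd1 g y 0 / 2) ((k + 1) * (g y 0 / 2 / y))).
  pose proof (Rmin_r (gd1 g y 0 / 2) ((k + 1) * (g y 0 / 2 / y))).
  assert (Heps : 0 < eps).
  { apply Rmin_pos; [lra|]. apply Rmult_lt_0_compat; [lra|].
    apply Rdiv_lt_0_compat; lra. }
  exists y; split; [lra|].
  apply filter_imp with (fun a => (1 + 2 / k) * a < y /\
    gd1 g 0 0 - eps < gd1 g a a < gd1 g 0 0 + eps /\
    gd1 g y 0 - gd1 g y 0 / 2 < gd1 g y a < gd1 g y 0 + gd1 g y 0 / 2 /\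
    g y 0 - g y 0 / 2 < g y a < g y 0 + g y 0 / 2).
  - intros a (Hlo & Hdiag & Hd1ya & Hgya). rewrite Hd00 in Hdiag.
    replace (a + 2 * a / k) with ((1 + 2 / k) * a) by (field; lra).
    split; [lra|]. split; [unfold eps in *; lra|].
    apply Rlt_trans with (g y 0 / 2 / y).
    + apply Rlt_div_l; unfold eps in *; lra.
    + apply Rmult_lt_compat_r; [apply Rinv_0_lt_compat|]; lra.
  - apply filter_and; [|apply filter_and; [|apply filter_and]].
    + apply at_right_0_mul_lt; lra.
    + apply (cont_strip_at_right (gd1 g) (fun a => a) 0);
        [apply Hg_cont_gd1, HG | assumption |].
      intro a. rewrite Rminus_0_r. apply Rle_refl.
    + apply cont_strip_vertical; [apply Hg_cont_gd1, HG | lra].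
    + apply cont_strip_vertical; [apply Hg_cont, HG | lra].
Qed.

Lemma lemma5p5_of_witness k g a y :
  0 < k -> Hg g -> Hg2 g -> 0 < a < 1 -> (exists! v, gd2 g v a = 0) ->
  a + 2 * a / k <= y <= 1 -> gd1 g a a < gd1 g y a ->
  gd1 g a a / (k + 1) < g y a / y ->
  0 < gd2 g a a /\ 0 < gd1 g a a / (k + 1) /\
  exists A, a + 2 * a / k <= A <= 1 /\
    (forall B, a + 2 * a / k <= B <= 1 -> g B a / B <= g A a / A) /\
    gd1 g a a / (k + 1) < g A a / A.
Proof.
  intros Hk HG HG2 Ha Hinfl Hy Hgap Hslope.
  assert (Hlo : 0 < 2 * a / k) by (apply Rdiv_lt_0_compat; lra).
  destruct (proj2 HG a Ha) as (_ & _ & _ & _ & _ & Hd1aa & _).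
  split; [apply (gd2_diag_pos g a y); auto; lra|].
  split; [apply Rdiv_lt_0_compat; lra|].
  destruct (max_ratio_on_interval (fun B => g B a) (a + 2 * a / k) 1)
    as [A [HA Hmax]]; [lra | |].
  { intros u _. apply derivable_continuous_pt. exists (gd1 g u a).
    apply is_derive_Reals, Hg_is_derive; [assumption | lra]. }
  exists A; split; [assumption|]; split; [assumption|].
  specialize (Hmax y Hy). lra.
Qed.

Theorem lemma5p5 (k : R) (g : R -> R -> R) :
  0 < k -> Hg g -> Hg2 g ->
  exists delta_a, 0 < delta_a < 1 /\
    forall a, 0 < a < delta_a ->
      0 < gd2 g a a /\
      0 < gd1 g a a / (k + 1) /\
      exists A, a + 2 * a / k <= A <= 1 /\
        (forall B, a + 2 * a / k <= B <= 1 -> g B a / B <= g A a / A) /\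
        gd1 g a a / (k + 1) < g A a / A.
Proof.
  intros Hk HG HG2.
  destruct (witness_near_corner k g Hk HG HG2) as [y [Hy Hnear]].
  pose proof HG2 as (_ & _ & _ & _ & _ & a0 & _ & Ha0 & _ & Hinfl & _).
  destruct (at_right_0_interval _
    (filter_and _ _ Hnear (at_right_0_mul_lt 1 a0 Rlt_0_1 (proj1 Ha0))))
    as [d [Hd Hall]].
  exists d; split; [assumption|].
  intros a Ha. destruct (Hall a Ha) as [(Hlo & Hgap & Hslope) Haa0].
  apply (lemma5p5_of_witness k g a y); auto; [lra | apply Hinfl | ]; lra.
Qed.
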